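(* Let $N\ge1$, $1\le q_0\le N$, $g_0:=\gcd(2N+2,q_0)$ and $\kappa_0:=\frac{2N+2}{g_0}$. Let $\overline q_k=(kq_0)\bmod(2N+2)$ if this is $<N+1$ and $\overline q_k=2N+2-(kq_0)\bmod(2N+2)$ otherwise ($k\ge1$). Then the $q_0$-breather sequence of modes $\{\overline q_k\}$ coincides with $\mathrm{Fix}(R^{\kappa_0})\cap\mathrm{Fix}(S)$ regarded as an invariant submanifold of $\mathrm{Fix}(S)$; that is, $\{\overline q_k:k\ge1\}\cap\{1,\dots,N\}=\{j\in\{1,\dots,N\}: j\equiv0 \bmod g_0\}$, the latter being exactly the set of modes $j$ whose coordinates $(Q_j,P_j)$ are not forced to vanish on $\mathrm{Fix}(R^{\kappa_0})\cap\mathrm{Fix}(S)$.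
   Context: Embed the fixed-boundary FPU chain of $N$ particles in the periodic chain of $2N+2$ particles, with Fourier mode coordinates $(Q_j,P_j)$, $j\in\mathbb Z/(2N+2)$. $R$ is the lattice shift symmetry of the periodic chain and $S$ the reflection symmetry $(Q_j,P_j)\mapsto(-Q_{2N+2-j},-P_{2N+2-j})$; for a map $G$, $\mathrm{Fix}(G)$ is its fixed-point set. Then $\mathrm{Fix}(S)=\{Q_j=-Q_{2N+2-j},P_j=-P_{2N+2-j}\}$ is identified with the fixed-boundary chain (modes $j=1,\dots,N$), and for $2N+2=\kappa g$, $\mathrm{Fix}(R^\kappa)=\{Q_j=P_j=0 \text{ whenever } j\not\equiv0\bmod g\}$. *)

From HB Require Import structures.
From mathcomp Require Import all_boot all_order all_algebra.
From mathcomp Require Import reals.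
Set Implicit Arguments. Unset Strict Implicit. Unset Printing Implicit Defensive.
Import Order.TTheory GRing.Theory Num.Theory.

(* Periodic chain with M = 2N+2 particles; Fourier modes indexed by
   j in Z/M, represented by naturals j < M.  A point of phase space is a
   pair of mode-coordinate functions Q P : nat -> R (only j < M matter). *)

Definition qbar (N q0 k : nat) : nat :=
  let r := (k * q0) %% (2 * N + 2) in
  if r < N + 1 then r else (2 * N + 2) - r.

Definition in_FixS (R : realType) (M : nat) (Q P : nat -> R) : Prop :=
  forall j, (j < M)%N ->
    Q j = (- Q ((M - j) %% M)%N)%R /\ P j = (- P ((M - j) %% M)%N)%R.

Definition in_FixRpow (R : realType) (M kappa : nat) (Q P : nat -> R) : Prop :=
  forall j, (j < M)%N -> ~~ ((M %/ kappa) %| j)%N -> Q j = 0%R /\ P j = 0%R.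

From HB Require Import structures.
From mathcomp Require Import all_boot all_algebra.
From mathcomp Require Import reals.
From mathcomp Require Import zify ring.
Import GRing.Theory.

(* By Bezout, the residues of the multiples of q0 modulo 2N+2 are exactly the
   multiples of g0 = gcd(2N+2, q0), and folding r |-> 2N+2-r preserves
   divisibility by g0; so the breather modes in {1,...,N} are the multiples
   of g0.  Fix(R^kappa0) kills every mode not divisible by (2N+2)/kappa0 = g0,
   while for g0 | j the vector e_j - e_{2N+2-j} lies in Fix(R^kappa0) and
   Fix(S) and does not vanish at j. *)

Lemma dvdn_modn [d m n : nat] : d %| m -> d %| n -> d %| n %% m.
Proof. by move=> dm dn; rewrite /dvdn (modn_dvdm _ dm). Qed.

Lemma divn_divnK (d m : nat) : 0 < m -> d %| m -> m %/ (m %/ d) = d.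
Proof. by move=> m_gt0 dm; rewrite divnA // mulKn. Qed.

Lemma gcdn_dvd_mul_mod [m q r : nat] :
  0 < m -> 0 < q -> gcdn m q %| r -> exists2 k, 0 < k & k * q = r %[mod m].
Proof.
move=> m_gt0 q_gt0 /dvdnP[t ->].
case: (egcdnP m q_gt0) => km kn Bezout _.
exists (km * t + m); first by rewrite addn_gt0 m_gt0 orbT.
have -> : (km * t + m) * q = (t * kn + q) * m + t * gcdn m q.
  by rewrite mulnDl mulnAC Bezout gcdnC; ring.
by rewrite modnMDl.
Qed.

Lemma dvdn_qbar (N q0 k d : nat) :
  d %| 2 * N + 2 -> d %| q0 -> d %| qbar N q0 k.
Proof.
move=> dM dq0; have d_r := dvdn_modn dM (dvdn_mull k dq0).
rewrite /qbar; case: ifP => _ //.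
by rewrite dvdn_subr // ltnW // ltn_pmod // addn_gt0 orbT.
Qed.

Lemma qbar_eq (N q0 k j : nat) :
  j <= N -> k * q0 = j %[mod 2 * N + 2] -> qbar N q0 k = j.
Proof.
move=> jN kq0; rewrite /qbar kq0 modn_small; last by lia.
by have -> : j < N + 1 by lia.
Qed.

Definition antisym_mode (R : pzRingType) (M j : nat) : nat -> R :=
  fun i => if i == j then 1%R else if i == M - j then (-1)%R else 0%R.

Lemma in_FixS_antisym_mode (R : realType) (M j : nat) :
  0 < j -> j.*2 < M -> in_FixS M (antisym_mode R M j) (fun=> 0%R).
Proof.
move=> j_gt0 jM i iM; split; last by rewrite oppr0.
rewrite /antisym_mode.
have [-> | i_gt0] := posnP i.
  by rewrite subn0 modnn !ifF ?oppr0 //; apply/eqP; lia.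
rewrite modn_small; last by lia.
have [-> | ij] := eqVneq i j; first by rewrite ifF ?eqxx ?opprK //; apply/eqP; lia.
have [-> | iMj] := eqVneq i (M - j).
  by rewrite ifT ?opprK //; apply/eqP; lia.
by rewrite !ifF ?oppr0 //; apply/eqP; lia.
Qed.

Lemma in_FixRpow_antisym_mode (R : realType) (M kappa j : nat) :
  j <= M -> M %/ kappa %| M -> M %/ kappa %| j ->
  in_FixRpow M kappa (antisym_mode R M j) (fun=> 0%R).
Proof.
move=> jM gM gj i _ gNi; split => //; rewrite /antisym_mode.
by rewrite !ifF //; apply: contraNF gNi => /eqP ->; rewrite ?dvdn_subr.
Qed.

Theorem proposition4 (R : realType) (N q0 : nat) :
  1 <= N -> 1 <= q0 <= N ->
  let M := 2 * N + 2 in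
  let g0 := gcdn M q0 in
  let kappa0 := M %/ g0 in
  (forall j : nat,
     ((exists k, 1 <= k /\ qbar N q0 k = j) /\ 1 <= j <= N)
     <-> (1 <= j <= N /\ g0 %| j))
  /\
  (forall j : nat, 1 <= j <= N ->
     ((g0 %| j) <->
      exists Q P : nat -> R,
        in_FixRpow M kappa0 Q P /\ in_FixS M Q P /\
        (Q j <> 0%R \/ P j <> 0%R))).
Proof.
move=> _ /andP[q0_gt0 _] M g0 kappa0.
have M_gt0 : 0 < M by rewrite addn_gt0 orbT.
have g0M : g0 %| M := dvdn_gcdl M q0.
have kappa0K : M %/ kappa0 = g0 by apply: divn_divnK.
split => j.
  split => [[[k [_ <-]] jN] | [jN g0j]].
    by split; last exact/dvdn_qbar/dvdn_gcdr.
  have [k k_gt0 kq0] := gcdn_dvd_mul_mod M_gt0 q0_gt0 g0j.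
  by split => //; exists k; split => //; apply: qbar_eq; case/andP: jN.
case/andP => j_gt0 jN; split => [g0j | [Q [P [FixR [_ Qj_neq0]]]]].
  exists (antisym_mode R M j), (fun=> 0%R); split; [|split].
  - by apply: in_FixRpow_antisym_mode; rewrite ?kappa0K //; lia.
  - by apply: in_FixS_antisym_mode => //; lia.
  - by left; rewrite /antisym_mode eqxx; apply/eqP; apply: oner_neq0.
apply/negPn/negP => g0Nj.
have [Qj0 Pj0] : Q j = 0%R /\ P j = 0%R by apply: FixR; [lia | rewrite kappa0K].
by case: Qj_neq0.
Qed.
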